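(* Let $(x_0,y_0)\neq(x_1,y_1)$ be points in the plane and $\vartheta_0,\vartheta_1$ real angles. Put $\Delta x=x_1-x_0$, $\Delta y=y_1-y_0$, $r=\sqrt{\Delta x^2+\Delta y^2}>0$, let $\varphi$ be an angle with $\Delta x=r\cos\varphi$, $\Delta y=r\sin\varphi$, and set $\Delta\vartheta=\vartheta_1-\vartheta_0$, $\Delta\varphi=\vartheta_0-\varphi$. Define, for $L>0$ and $A\in\mathbb{R}$, $$\mathbf{G}(L,A)=\begin{pmatrix}\Delta x-L\int_0^1\cos\big(A\tau^2+(\Delta\vartheta-A)\tau+\vartheta_0\big)\,\mathrm{d}\tau\\ \Delta y-L\int_0^1\sin\big(A\tau^2+(\Delta\vartheta-A)\tau+\vartheta_0\big)\,\mathrm{d}\tau\end{pmatrix},$$ $$g(A)=\int_0^1\sin\big(A\tau^2+(\Delta\vartheta-A)\tau+\Delta\varphi\big)\,\mathrm{d}\tau,\qquad h(A)=\int_0^1\cos\big(A\tau^2+(\Delta\vartheta-A)\tau+\Delta\varphi\big)\,\mathrm{d}\tau .$$ Then the solutions $(L,A)$ (with $L>0$) of $\mathbf{G}(L,A)=\mathbf{0}$ are given by $$L=\frac{\sqrt{\Delta x^2+\Delta y^2}}{h(A)},$$ where $A$ is a root of $g$ (and for such $A$ one has $h(A)\neq 0$, so $L$ is well defined); the corresponding clothoid parameters are $$\kappa=\frac{\Delta\vartheta-A}{L},\qquad \kappa'=\frac{2A}{L^2}.$$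
   Context: A clothoid with starting point $(x_0,y_0)$, initial angle $\vartheta_0$, curvature $\kappa$ and curvature derivative $\kappa'$ is the curve $x(s)=x_0+\int_0^s\cos(\tfrac12\kappa'\tau^2+\kappa\tau+\vartheta_0)\,\mathrm{d}\tau$, $y(s)=y_0+\int_0^s\sin(\tfrac12\kappa'\tau^2+\kappa\tau+\vartheta_0)\,\mathrm{d}\tau$, $s$ being arc length; its angle at arc length $s$ is $\tfrac12\kappa's^2+\kappa s+\vartheta_0$. The system $\mathbf{G}(L,A)=\mathbf{0}$ expresses that such a clothoid of length $L$, with $\kappa=(\Delta\vartheta-A)/L$ and $\kappa'=2A/L^2$, reaches $(x_1,y_1)$ at $s=L$ (its final angle then automatically equals $\vartheta_1$). *)

From Stdlib Require Import Reals.
From Coquelicot Require Import Coquelicot.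
Open Scope R_scope.

Definition clothoid_x (x0 th0 k k' s : R) : R :=
  x0 + RInt (fun t => cos (/2 * k' * t ^ 2 + k * t + th0)) 0 s.
Definition clothoid_y (y0 th0 k k' s : R) : R :=
  y0 + RInt (fun t => sin (/2 * k' * t ^ 2 + k * t + th0)) 0 s.

Definition G (dx dy dth th0 L A : R) : R * R :=
  (dx - L * RInt (fun t => cos (A * t ^ 2 + (dth - A) * t + th0)) 0 1,
   dy - L * RInt (fun t => sin (A * t ^ 2 + (dth - A) * t + th0)) 0 1).

Definition gfun (dth dphi A : R) : R :=
  RInt (fun t => sin (A * t ^ 2 + (dth - A) * t + dphi)) 0 1.
Definition hfun (dth dphi A : R) : R :=
  RInt (fun t => cos (A * t ^ 2 + (dth - A) * t + dphi)) 0 1.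

(* Write [C] and [S] for the two integrals in [G] and rotate the target vector
   (dx, dy) = r (cos phi, sin phi) by -phi.  Subtracting phi from the phase
   rotates (C, S) the same way, turning them into (h, g); so [G = 0] says that
   L (h, g) = (r, 0), i.e. g = 0 and L = r / h.  For the clothoid, the
   substitution s = L t maps the arc-length integrals over [0, L] onto L times
   the integrals over [0, 1] appearing in [G]. *)

From Stdlib Require Import Reals Lra.
From Coquelicot Require Import Coquelicot.
Open Scope R_scope.

Lemma continuous_cos_quadratic (A B c t : R) :
  continuous (fun t => cos (A * t ^ 2 + B * t + c)) t.
Proof.
  apply (@ex_derive_continuous R_AbsRing R_NormedModule).
  auto_derive; auto.
Qed.

Lemma continuous_sin_quadratic (A B c t : R) :
  continuous (fun t => sin (A * t ^ 2 + B * t + c)) t.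
Proof.
  apply (@ex_derive_continuous R_AbsRing R_NormedModule).
  auto_derive; auto.
Qed.

Lemma ex_RInt_cos_quadratic (A B c u v : R) :
  ex_RInt (fun t => cos (A * t ^ 2 + B * t + c)) u v.
Proof.
  apply (@ex_RInt_continuous R_CompleteNormedModule); intros t _.
  apply continuous_cos_quadratic.
Qed.

Lemma ex_RInt_sin_quadratic (A B c u v : R) :
  ex_RInt (fun t => sin (A * t ^ 2 + B * t + c)) u v.
Proof.
  apply (@ex_RInt_continuous R_CompleteNormedModule); intros t _.
  apply continuous_sin_quadratic.
Qed.

Lemma RInt_sin_quadratic_phase_sub (A B a b u v : R) :
  RInt (fun t => sin (A * t ^ 2 + B * t + (a - b))) u v =
  cos b * RInt (fun t => sin (A * t ^ 2 + B * t + a)) u v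
  - sin b * RInt (fun t => cos (A * t ^ 2 + B * t + a)) u v.
Proof.
  rewrite (RInt_ext (V := R_CompleteNormedModule) _
    (fun t => minus (scal (cos b) (sin (A * t ^ 2 + B * t + a)))
                    (scal (sin b) (cos (A * t ^ 2 + B * t + a))))).
  - rewrite (RInt_minus (V := R_CompleteNormedModule));
      try apply (ex_RInt_scal (V := R_CompleteNormedModule)).
    + rewrite !(RInt_scal (V := R_CompleteNormedModule));
        [reflexivity | apply ex_RInt_cos_quadratic | apply ex_RInt_sin_quadratic].
    + apply ex_RInt_sin_quadratic.
    + apply ex_RInt_cos_quadratic.
  - intros t _.
    replace (A * t ^ 2 + B * t + (a - b)) with (A * t ^ 2 + B * t + a - b) by ring.
    rewrite sin_minus; cbn; unfold mult, minus, plus, opp; cbn; ring.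
Qed.

Lemma RInt_cos_quadratic_phase_sub (A B a b u v : R) :
  RInt (fun t => cos (A * t ^ 2 + B * t + (a - b))) u v =
  cos b * RInt (fun t => cos (A * t ^ 2 + B * t + a)) u v
  + sin b * RInt (fun t => sin (A * t ^ 2 + B * t + a)) u v.
Proof.
  rewrite (RInt_ext (V := R_CompleteNormedModule) _
    (fun t => plus (scal (cos b) (cos (A * t ^ 2 + B * t + a)))
                   (scal (sin b) (sin (A * t ^ 2 + B * t + a))))).
  - rewrite (RInt_plus (V := R_CompleteNormedModule));
      try apply (ex_RInt_scal (V := R_CompleteNormedModule)).
    + rewrite !(RInt_scal (V := R_CompleteNormedModule));
        [reflexivity | apply ex_RInt_sin_quadratic | apply ex_RInt_cos_quadratic].
    + apply ex_RInt_cos_quadratic.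
    + apply ex_RInt_sin_quadratic.
  - intros t _.
    replace (A * t ^ 2 + B * t + (a - b)) with (A * t ^ 2 + B * t + a - b) by ring.
    rewrite cos_minus; cbn; unfold mult, plus; cbn; ring.
Qed.

Lemma RInt_rescale_unit (f : R -> R) (L : R) : (forall t, continuous f t) ->
  RInt f 0 L = L * RInt (fun t => f (L * t)) 0 1.
Proof.
  intro Hf.
  assert (Hlin : forall a b, ex_RInt f a b)
    by (intros a b; apply (@ex_RInt_continuous R_CompleteNormedModule); auto).
  replace (RInt f 0 L) with (RInt f (L * 0 + 0) (L * 1 + 0)) by (f_equal; ring).
  rewrite <- (RInt_comp_lin (V := R_CompleteNormedModule)) by apply Hlin.
  rewrite <- (RInt_scal (V := R_CompleteNormedModule)).
  - apply (RInt_ext (V := R_CompleteNormedModule)); intros t _.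
    now replace (L * t + 0) with (L * t) by ring.
  - apply (@ex_RInt_continuous R_CompleteNormedModule); intros t _.
    apply (continuous_comp (fun t => L * t) f); [| apply Hf].
    apply (@ex_derive_continuous R_AbsRing R_NormedModule). auto_derive; auto.
Qed.

Lemma clothoid_x_rescale (x0 th0 A B L : R) : L <> 0 ->
  clothoid_x x0 th0 (B / L) (2 * A / L ^ 2) L =
  x0 + L * RInt (fun t => cos (A * t ^ 2 + B * t + th0)) 0 1.
Proof.
  intro HL. unfold clothoid_x. rewrite RInt_rescale_unit.
  - do 2 f_equal. apply (RInt_ext (V := R_CompleteNormedModule)); intros t _.
    f_equal. field. exact HL.
  - intro t. apply (continuous_cos_quadratic (/ 2 * (2 * A / L ^ 2)) (B / L) th0).
Qed.

Lemma clothoid_y_rescale (y0 th0 A B L : R) : L <> 0 ->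
  clothoid_y y0 th0 (B / L) (2 * A / L ^ 2) L =
  y0 + L * RInt (fun t => sin (A * t ^ 2 + B * t + th0)) 0 1.
Proof.
  intro HL. unfold clothoid_y. rewrite RInt_rescale_unit.
  - do 2 f_equal. apply (RInt_ext (V := R_CompleteNormedModule)); intros t _.
    f_equal. field. exact HL.
  - intro t. apply (continuous_sin_quadratic (/ 2 * (2 * A / L ^ 2)) (B / L) th0).
Qed.

Lemma polar_scale_eq (r phi L c s : R) : r <> 0 ->
  (r * cos phi - L * c = 0 /\ r * sin phi - L * s = 0) <->
  (cos phi * s - sin phi * c = 0 /\ cos phi * c + sin phi * s <> 0 /\
   L = r / (cos phi * c + sin phi * s)).
Proof.
  intro Hr. pose proof (sin2_cos2 phi) as Hpyth. unfold Rsqr in Hpyth.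
  set (g := cos phi * s - sin phi * c).
  set (h := cos phi * c + sin phi * s).
  split.
  - intros [Hc Hs].
    assert (Hg : L * g = 0).
    { unfold g. replace (L * _) with (cos phi * (L * s) - sin phi * (L * c)) by ring.
      replace (L * s) with (r * sin phi) by lra.
      replace (L * c) with (r * cos phi) by lra. ring. }
    assert (Hh : L * h = r).
    { unfold h. replace (L * _) with (cos phi * (L * c) + sin phi * (L * s)) by ring.
      replace (L * s) with (r * sin phi) by lra.
      replace (L * c) with (r * cos phi) by lra.
      rewrite <- (Rmult_1_r r) at 3. rewrite <- Hpyth. ring. }
    assert (Hh0 : h <> 0) by (intro Z; rewrite Z in Hh; lra).
    repeat split; [| exact Hh0 | rewrite <- Hh; field; exact Hh0].
    destruct (Rmult_integral _ _ Hg) as [HL | ?]; [rewrite HL in Hh; lra | assumption].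
  - intros [Hg [Hh0 ->]].
    assert (Ec : c = cos phi * h - sin phi * g).
    { unfold g, h. rewrite <- (Rmult_1_r c) at 1. rewrite <- Hpyth. ring. }
    assert (Es : s = sin phi * h + cos phi * g).
    { unfold g, h. rewrite <- (Rmult_1_r s) at 1. rewrite <- Hpyth. ring. }
    rewrite Ec, Es, Hg. split; field; exact Hh0.
Qed.

Lemma distinct_points_dist_neq0 (x0 y0 x1 y1 : R) : (x0, y0) <> (x1, y1) ->
  sqrt ((x1 - x0) ^ 2 + (y1 - y0) ^ 2) <> 0.
Proof.
  intro Hne. apply Rgt_not_eq, sqrt_lt_R0.
  destruct (Req_dec (x1 - x0) 0), (Req_dec (y1 - y0) 0).
  - exfalso. apply Hne. f_equal; lra.
  - pose proof (pow2_gt_0 (y1 - y0)); nra.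
  - pose proof (pow2_gt_0 (x1 - x0)); nra.
  - pose proof (pow2_gt_0 (x1 - x0)); nra.
Qed.

Theorem lemma3p3 (x0 y0 x1 y1 th0 th1 phi : R) :
  (x0, y0) <> (x1, y1) ->
  let dx := x1 - x0 in
  let dy := y1 - y0 in
  let r := sqrt (dx ^ 2 + dy ^ 2) in
  dx = r * cos phi ->
  dy = r * sin phi ->
  let dth := th1 - th0 in
  let dphi := th0 - phi in
  (forall L A : R, 0 < L ->
     (G dx dy dth th0 L A = (0, 0) <->
      (gfun dth dphi A = 0 /\ hfun dth dphi A <> 0 /\
       L = sqrt (dx ^ 2 + dy ^ 2) / hfun dth dphi A))) /\
  (forall L A : R, 0 < L -> G dx dy dth th0 L A = (0, 0) ->
     let k := (dth - A) / L in
     let k' := 2 * A / L ^ 2 in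
     clothoid_x x0 th0 k k' L = x1 /\ clothoid_y y0 th0 k k' L = y1 /\
     / 2 * k' * L ^ 2 + k * L + th0 = th1).
Proof.
  intros Hne dx dy r Hx Hy dth dphi.
  assert (Hr : r <> 0) by now apply distinct_points_dist_neq0.
  split.
  - intros L A _.
    unfold G, gfun, hfun, dphi.
    rewrite pair_equal_spec, RInt_sin_quadratic_phase_sub, RInt_cos_quadratic_phase_sub.
    fold r. rewrite Hx, Hy. now apply polar_scale_eq.
  - intros L A HL HG k k'.
    apply pair_equal_spec in HG as [Hc Hs].
    unfold k, k'.
    rewrite clothoid_x_rescale, clothoid_y_rescale by lra.
    unfold dx, dy, dth in *. repeat split; [lra | lra | field; lra].
Qed.
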